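(* Let $T$ be a bimonad on a left closed monoidal category $\mathcal C$. (a) If $T$ admits a left antipode, it is unique. (b) If $T$ is a left Hopf monad, its left antipode $s^l$ satisfies, for all objects $X,Y,Z$: $s^l_{X,Y}\mu_{[TX,Y]^l}=[X,\mu_Y]^l\,s^l_{X,TY}\,T(s^l_{TX,Y})\,T^2[\mu_X,Y]^l$; $s^l_{X,Y}\eta_{[TX,Y]^l}=[\eta_X,\eta_Y]^l$; $s^l_{X\otimes Y,Z}\,T[T_2(X,Y),Z]^l=[X,s^l_{Y,Z}]^l\,s^l_{X,[TY,Z]^l}$; $s^l_{T\mathbb 1,X}[T_0,X]^l=\mathrm{id}_{TX}$, where the canonical isomorphisms $[X\otimes Y,Z]^l\cong[X,[Y,Z]^l]^l$ and $[\mathbb 1,X]^l\cong X$ are suppressed. (The analogous statements hold for right antipodes on right closed categories.)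
   Context: Monoidal categories are strict. A bimonad on $\mathcal C$ is a monad $(T,\mu,\eta)$ with a comonoidal structure $T_2(X,Y)\colon T(X\otimes Y)\to TX\otimes TY$, $T_0\colon T\mathbb 1\to\mathbb 1$ such that $\mu,\eta$ are comonoidal. $T$ is a left Hopf monad if $H^l_{X,Y}=(TX\otimes\mu_Y)T_2(X,TY)$ is invertible for all $X,Y$. A monoidal category is left closed if each $?\otimes X$ has a right adjoint $[X,?]^l$, with counit $\mathrm{ev}^X_Y\colon[X,Y]^l\otimes X\to Y$ and unit $\mathrm{coev}^X_Y\colon Y\to[X,Y\otimes X]^l$. A left antipode for $T$ is a natural transformation $s^l_{X,Y}\colon T[TX,Y]^l\to[X,TY]^l$ such that for all $X,Y$: (1) $T\big(\mathrm{ev}^X_Y([\eta_X,Y]^l\otimes X)\big)=\mathrm{ev}^{TX}_{TY}\big(s^l_{TX,Y}\,T[\mu_X,Y]^l\otimes TX\big)T_2([TX,Y]^l,X)$; (2) $[X,TY\otimes\eta_X]^l\,\mathrm{coev}^X_{TY}=[X,(TY\otimes\mu_X)T_2(Y,TX)]^l\,s^l_{X,Y\otimes TX}\,T(\mathrm{coev}^{TX}_Y)$. It is a known result that a bimonad on a left closed category is a left Hopf monad iff it admits a left antipode. *)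

(* Strictness is encoded by equalities of objects together with the
   corresponding equalities of morphisms up to transport along them. *)

Set Implicit Arguments.
Unset Strict Implicit.

Definition castH {O : Type} {H : O -> O -> Type} {X X' Y Y' : O}
  (e1 : X = X') (e2 : Y = Y') (f : H X Y) : H X' Y' :=
  match e1 in _ = a return H a Y' with
  | eq_refl => match e2 in _ = b return H X b with eq_refl => f end
  end.

Unset Implicit Arguments.
Record StrictMonCat := {
  ob :> Type;
  hom : ob -> ob -> Type;
  comp : forall X Y Z : ob, hom Y Z -> hom X Y -> hom X Z;
  idm : forall X : ob, hom X X;
  comp_assoc : forall (X Y Z W : ob) (f : hom Z W) (g : hom Y Z) (h : hom X Y),
      comp X Z W f (comp X Y Z g h) = comp X Y W (comp Y Z W f g) h;
  comp_id_l : forall (X Y : ob) (f : hom X Y), comp X Y Y (idm Y) f = f;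
  comp_id_r : forall (X Y : ob) (f : hom X Y), comp X X Y f (idm X) = f;
  tens : ob -> ob -> ob;
  tensm : forall X X' Y Y' : ob, hom X X' -> hom Y Y' -> hom (tens X Y) (tens X' Y');
  tensm_id : forall X Y : ob, tensm X X Y Y (idm X) (idm Y) = idm (tens X Y);
  tensm_comp : forall (X X' X'' Y Y' Y'' : ob)
      (f : hom X' X'') (f' : hom X X') (g : hom Y' Y'') (g' : hom Y Y'),
      tensm X X'' Y Y'' (comp X X' X'' f f') (comp Y Y' Y'' g g')
      = comp (tens X Y) (tens X' Y') (tens X'' Y'')
             (tensm X' X'' Y' Y'' f g) (tensm X X' Y Y' f' g');
  unit : ob;
  tens_assoc : forall X Y Z : ob, tens (tens X Y) Z = tens X (tens Y Z);
  tens_unit_l : forall X : ob, tens unit X = X;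
  tens_unit_r : forall X : ob, tens X unit = X;
  tensm_assoc : forall (X X' Y Y' Z Z' : ob) (f : hom X X') (g : hom Y Y') (h : hom Z Z'),
      castH (tens_assoc X Y Z) (tens_assoc X' Y' Z')
        (tensm (tens X Y) (tens X' Y') Z Z' (tensm X X' Y Y' f g) h)
      = tensm X X' (tens Y Z) (tens Y' Z') f (tensm Y Y' Z Z' g h);
  tensm_unit_l : forall (X Y : ob) (f : hom X Y),
      castH (tens_unit_l X) (tens_unit_l Y) (tensm unit unit X Y (idm unit) f) = f;
  tensm_unit_r : forall (X Y : ob) (f : hom X Y),
      castH (tens_unit_r X) (tens_unit_r Y) (tensm X Y unit unit f (idm unit)) = f
}.

Set Implicit Arguments.
Arguments hom {C} : rename.
Arguments comp {C X Y Z} : rename.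
Arguments idm {C} X : rename.
Arguments tens {C} : rename.
Arguments tensm {C X X' Y Y'} : rename.
Arguments unit {C} : rename.
Arguments tens_assoc {C} : rename.
Arguments tens_unit_l {C} : rename.
Arguments tens_unit_r {C} : rename.

Declare Scope cat_scope.
Delimit Scope cat_scope with cat.
Open Scope cat_scope.
Notation "g ∘ f" := (comp g f) (at level 40, left associativity) : cat_scope.
Notation "f ⊗ g" := (tensm f g) (at level 30, right associativity) : cat_scope.

Definition eqhom {C : StrictMonCat} {X Y : C} (e : X = Y) : hom X Y :=
  castH eq_refl e (idm X).

(* Left closed structure: for each X, the functor ? ⊗ X has a right adjoint
   [X,?]^l, given by the universal arrow ev^X_Y : [X,Y]^l ⊗ X -> Y. *)
Record LeftClosed (C : StrictMonCat) := {
  ihom : C -> C -> C;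
  ev : forall X Y : C, hom (tens (ihom X Y) X) Y;
  cur : forall A X Y : C, hom (tens A X) Y -> hom A (ihom X Y);
  cur_ev : forall (A X Y : C) (f : hom (tens A X) Y),
      ev X Y ∘ (cur f ⊗ idm X) = f;
  cur_uniq : forall (A X Y : C) (g : hom A (ihom X Y)),
      cur (ev X Y ∘ (g ⊗ idm X)) = g
}.
Arguments ihom {C} l X Y.
Arguments ev {C} l X Y.
Arguments cur {C} l {A X Y} f.

Section Closed.
Context {C : StrictMonCat} (L : LeftClosed C).

Definition coev (X Y : C) : hom Y (ihom L X (tens Y X)) :=
  cur L (idm (tens Y X)).

Definition ihom_map {X X' Y Y' : C} (f : hom X' X) (g : hom Y Y')
  : hom (ihom L X Y) (ihom L X' Y') :=
  cur L (g ∘ ev L X Y ∘ (idm (ihom L X Y) ⊗ f)).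

Definition ihom_curry (X Y Z : C)
  : hom (ihom L (tens X Y) Z) (ihom L X (ihom L Y Z)) :=
  cur L (cur L (ev L (tens X Y) Z ∘ eqhom (tens_assoc (ihom L (tens X Y) Z) X Y))).

Definition ihom_unit (X : C) : hom (ihom L unit X) X :=
  ev L unit X ∘ eqhom (eq_sym (tens_unit_r (ihom L unit X))).
Definition ihom_unit_inv (X : C) : hom X (ihom L unit X) :=
  cur L (eqhom (tens_unit_r X)).
End Closed.

Record Bimonad (C : StrictMonCat) := {
  Tob : C -> C;
  Tmor : forall X Y : C, hom X Y -> hom (Tob X) (Tob Y);
  Tmor_id : forall X : C, Tmor (idm X) = idm (Tob X);
  Tmor_comp : forall (X Y Z : C) (g : hom Y Z) (f : hom X Y),
      Tmor (g ∘ f) = Tmor g ∘ Tmor f;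
  mu : forall X : C, hom (Tob (Tob X)) (Tob X);
  eta : forall X : C, hom X (Tob X);
  mu_nat : forall (X Y : C) (f : hom X Y), Tmor f ∘ mu X = mu Y ∘ Tmor (Tmor f);
  eta_nat : forall (X Y : C) (f : hom X Y), Tmor f ∘ eta X = eta Y ∘ f;
  mu_assoc : forall X : C, mu X ∘ Tmor (mu X) = mu X ∘ mu (Tob X);
  mu_eta_l : forall X : C, mu X ∘ eta (Tob X) = idm (Tob X);
  mu_eta_r : forall X : C, mu X ∘ Tmor (eta X) = idm (Tob X);
  T2 : forall X Y : C, hom (Tob (tens X Y)) (tens (Tob X) (Tob Y));
  T0 : hom (Tob unit) unit;
  T2_nat : forall (X X' Y Y' : C) (f : hom X X') (g : hom Y Y'),
      T2 X' Y' ∘ Tmor (f ⊗ g) = (Tmor f ⊗ Tmor g) ∘ T2 X Y;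
  T2_coassoc : forall X Y Z : C,
      castH (f_equal Tob (tens_assoc X Y Z)) (tens_assoc (Tob X) (Tob Y) (Tob Z))
        ((T2 X Y ⊗ idm (Tob Z)) ∘ T2 (tens X Y) Z)
      = (idm (Tob X) ⊗ T2 Y Z) ∘ T2 X (tens Y Z);
  T2_counit_l : forall X : C,
      castH (f_equal Tob (tens_unit_l X)) (tens_unit_l (Tob X))
        ((T0 ⊗ idm (Tob X)) ∘ T2 unit X) = idm (Tob X);
  T2_counit_r : forall X : C,
      castH (f_equal Tob (tens_unit_r X)) (tens_unit_r (Tob X))
        ((idm (Tob X) ⊗ T0) ∘ T2 X unit) = idm (Tob X);
  mu_T2 : forall X Y : C,
      T2 X Y ∘ mu (tens X Y) = (mu X ⊗ mu Y) ∘ T2 (Tob X) (Tob Y) ∘ Tmor (T2 X Y);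
  mu_T0 : T0 ∘ mu unit = T0 ∘ Tmor T0;
  eta_T2 : forall X Y : C, T2 X Y ∘ eta (tens X Y) = eta X ⊗ eta Y;
  eta_T0 : T0 ∘ eta unit = idm unit
}.
Arguments Tob {C} b X.
Arguments Tmor {C} b {X Y} f.
Arguments mu {C} b X.
Arguments eta {C} b X.
Arguments T2 {C} b X Y.
Arguments T0 {C} b.

Definition is_iso {C : StrictMonCat} {X Y : C} (f : hom X Y) : Prop :=
  exists g : hom Y X, g ∘ f = idm X /\ f ∘ g = idm Y.

Definition fusion_l {C : StrictMonCat} (B : Bimonad C) (X Y : C)
  : hom (Tob B (tens X (Tob B Y))) (tens (Tob B X) (Tob B Y)) :=
  (idm (Tob B X) ⊗ mu B Y) ∘ T2 B X (Tob B Y).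

Definition is_left_Hopf {C : StrictMonCat} (B : Bimonad C) : Prop :=
  forall X Y : C, is_iso (fusion_l B X Y).

Definition antipode_type {C : StrictMonCat} (L : LeftClosed C) (B : Bimonad C) :=
  forall X Y : C, hom (Tob B (ihom L (Tob B X) Y)) (ihom L X (Tob B Y)).

Definition is_left_antipode {C : StrictMonCat} (L : LeftClosed C) (B : Bimonad C)
  (s : antipode_type L B) : Prop :=
  (forall (X X' Y : C) (f : hom X' X),
      s X' Y ∘ Tmor B (ihom_map L (Tmor B f) (idm Y))
      = ihom_map L f (idm (Tob B Y)) ∘ s X Y) /\
  (forall (X Y Y' : C) (g : hom Y Y'),
      s X Y' ∘ Tmor B (ihom_map L (idm (Tob B X)) g)
      = ihom_map L (idm X) (Tmor B g) ∘ s X Y) /\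
  (forall X Y : C,
      Tmor B (ev L X Y ∘ (ihom_map L (eta B X) (idm Y) ⊗ idm X))
      = ev L (Tob B X) (Tob B Y)
        ∘ ((s (Tob B X) Y ∘ Tmor B (ihom_map L (mu B X) (idm Y))) ⊗ idm (Tob B X))
        ∘ T2 B (ihom L (Tob B X) Y) X) /\
  (forall X Y : C,
      ihom_map L (idm X) (idm (Tob B Y) ⊗ eta B X) ∘ coev L X (Tob B Y)
      = ihom_map L (idm X) ((idm (Tob B Y) ⊗ mu B X) ∘ T2 B Y (Tob B X))
        ∘ s X (tens Y (Tob B X)) ∘ Tmor B (coev L (Tob B X) Y)).
Arguments is_left_antipode {C} L B s.

(** An antipode [s] yields an explicit inverse of the left fusion operator
    [H_{A,X} = (TA ⊗ μ_X) T_2(A,TX)], namely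
    [H^{-1}_{A,X} = s♭_{TX, A ⊗ TX} (T(cur (A ⊗ μ_X)) ⊗ TX)], where [s♭] is the
    transpose of [s] under the adjunction [? ⊗ X ⊣ [X,?]^l]; conversely
    [s♭_{X,Y} = T(ev) H^{-1} (T[TX,Y]^l ⊗ η_X)].  Hence an antipode is determined
    by the inverse of [H], which is unique, and every identity of (b) is the
    transpose of a compatibility of [H^{-1}] with [η], [μ], [T_2] or [T_0]; each
    of these follows from the corresponding (comonoidality) property of [H]
    by conjugating with [H^{-1}]. *)

From Stdlib Require Import ProofIrrelevance Setoid.

Section Category.
Context {C : StrictMonCat}.

Lemma compA {X Y Z W : C} (f : hom Z W) (g : hom Y Z) (h : hom X Y) :
  f ∘ (g ∘ h) = f ∘ g ∘ h.
Proof. apply comp_assoc. Qed.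

Lemma congr_last2 {X Y1 Y2 W : C} (x : hom Y2 W) (b : hom Y1 Y2) (c : hom X Y1)
  (d : hom X Y2) : b ∘ c = d -> x ∘ b ∘ c = x ∘ d.
Proof. intros E. rewrite <- compA, E. reflexivity. Qed.

Lemma congr_last2_2 {X Y1 Y2 Y3 W : C} (x : hom Y2 W) (b : hom Y1 Y2) (c : hom X Y1)
  (d : hom Y3 Y2) (e : hom X Y3) : b ∘ c = d ∘ e -> x ∘ b ∘ c = x ∘ d ∘ e.
Proof. intros E. rewrite <- !compA, E. reflexivity. Qed.

Lemma congr_last3 {X Y1 Y2 Y3 W : C} (x : hom Y3 W) (a : hom Y2 Y3) (b : hom Y1 Y2)
  (c : hom X Y1) (d : hom X Y3) : a ∘ b ∘ c = d -> x ∘ a ∘ b ∘ c = x ∘ d.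
Proof. intros E. rewrite <- E, !compA. reflexivity. Qed.

Lemma tensm_comp_l {X X' X'' Y : C} (f : hom X' X'') (f' : hom X X') :
  (f ∘ f') ⊗ idm Y = (f ⊗ idm Y) ∘ (f' ⊗ idm Y).
Proof. rewrite <- tensm_comp, comp_id_l. reflexivity. Qed.

Lemma tensm_comp_r {X Y Y' Y'' : C} (g : hom Y' Y'') (g' : hom Y Y') :
  idm X ⊗ (g ∘ g') = (idm X ⊗ g) ∘ (idm X ⊗ g').
Proof. rewrite <- tensm_comp, comp_id_l. reflexivity. Qed.

Lemma tensm_split_r {X X' Y Y' : C} (f : hom X X') (g : hom Y Y') :
  f ⊗ g = (idm X' ⊗ g) ∘ (f ⊗ idm Y).
Proof. rewrite <- tensm_comp, comp_id_l, comp_id_r. reflexivity. Qed.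

Lemma tensm_interchange {X X' Y Y' : C} (f : hom X X') (g : hom Y Y') :
  (f ⊗ idm Y') ∘ (idm X ⊗ g) = (idm X' ⊗ g) ∘ (f ⊗ idm Y).
Proof. rewrite <- !tensm_comp, !comp_id_l, !comp_id_r. reflexivity. Qed.

Lemma tensm_absorb_r {X1 X2 X3 Y1 Y2 : C} (a : hom X2 X3) (b : hom X1 X2) (h : hom Y1 Y2) :
  (a ⊗ idm Y2) ∘ (b ⊗ idm Y2) ∘ (idm X1 ⊗ h) = (a ⊗ h) ∘ (b ⊗ idm Y1).
Proof. rewrite <- tensm_comp_l, <- !tensm_comp, !comp_id_l, !comp_id_r. reflexivity. Qed.

Lemma castH_eqhom {X X' Y Y' : C} (e1 : X = X') (e2 : Y = Y') (f : hom X Y) :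
  castH e1 e2 f = eqhom e2 ∘ f ∘ eqhom (eq_sym e1).
Proof. destruct e1, e2. unfold eqhom; simpl. rewrite comp_id_l, comp_id_r. reflexivity. Qed.

Lemma eqhom_trans {X Y Z : C} (e1 : X = Y) (e2 : Y = Z) :
  eqhom e2 ∘ eqhom e1 = eqhom (eq_trans e1 e2).
Proof. destruct e1, e2. apply comp_id_l. Qed.

Lemma eqhom_K {X Y : C} (e : X = Y) (e' : Y = X) : eqhom e' ∘ eqhom e = idm X.
Proof.
  rewrite eqhom_trans, (proof_irrelevance _ (eq_trans e e') eq_refl). reflexivity.
Qed.

Lemma tensm_assoc_eqhom {X X' Y Y' Z Z' : C} (f : hom X X') (g : hom Y Y') (h : hom Z Z') :
  eqhom (tens_assoc X' Y' Z') ∘ ((f ⊗ g) ⊗ h) = (f ⊗ (g ⊗ h)) ∘ eqhom (tens_assoc X Y Z).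
Proof.
  pose proof (tensm_assoc C X X' Y Y' Z Z' f g h) as E. rewrite castH_eqhom in E.
  rewrite <- E, <- compA, eqhom_K, comp_id_r. reflexivity.
Qed.

Lemma tensm_unit_r_eqhom {W W' : C} (φ : hom W' W) :
  eqhom (eq_sym (tens_unit_r W)) ∘ φ = (φ ⊗ idm unit) ∘ eqhom (eq_sym (tens_unit_r W')).
Proof.
  pose proof (tensm_unit_r C W' W φ) as E. rewrite castH_eqhom in E.
  rewrite <- E at 1. rewrite !compA, eqhom_K, comp_id_l. reflexivity.
Qed.

Lemma intertwine_inv {X Y X' Y' : C} (h : hom X Y) (g : hom Y X) (h' : hom X' Y')
  (g' : hom Y' X') (a : hom X X') (b : hom Y Y') :
  h ∘ g = idm Y -> g' ∘ h' = idm X' -> h' ∘ a = b ∘ h -> a ∘ g = g' ∘ b.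
Proof.
  intros hg g'h' intertwine.
  transitivity (g' ∘ h' ∘ a ∘ g). { rewrite g'h', comp_id_l. reflexivity. }
  rewrite <- (compA g' h' a), intertwine, !compA, <- (compA _ h g), hg, comp_id_r.
  reflexivity.
Qed.
End Category.

Section Transpose.
Context {C : StrictMonCat} (L : LeftClosed C).

Definition uncur {A X Y : C} (φ : hom A (ihom L X Y)) : hom (tens A X) Y :=
  ev L X Y ∘ (φ ⊗ idm X).

Lemma uncur_inj {A X Y : C} (f g : hom A (ihom L X Y)) : uncur f = uncur g -> f = g.
Proof.
  intro E. rewrite <- (cur_uniq f), <- (cur_uniq g).
  unfold uncur in E. rewrite E. reflexivity.
Qed.

Lemma uncur_comp {A A' X Y : C} (φ : hom A (ihom L X Y)) (g : hom A' A) :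
  uncur (φ ∘ g) = uncur φ ∘ (g ⊗ idm X).
Proof. unfold uncur. rewrite tensm_comp_l, compA. reflexivity. Qed.

Lemma uncur_cur {A X Y : C} (f : hom (tens A X) Y) : uncur (cur L f) = f.
Proof. apply cur_ev. Qed.

Lemma uncur_idm {X Y : C} : uncur (idm (ihom L X Y)) = ev L X Y.
Proof. unfold uncur. rewrite tensm_id, comp_id_r. reflexivity. Qed.

Lemma uncur_coev (X Y : C) : uncur (coev L X Y) = idm (tens Y X).
Proof. apply uncur_cur. Qed.

Lemma uncur_ihom_map {X X' Y Y' : C} (f : hom X' X) (g : hom Y Y') :
  uncur (ihom_map L f g) = g ∘ ev L X Y ∘ (idm _ ⊗ f).
Proof. apply uncur_cur. Qed.

Lemma uncur_ihom_map_comp {A X X' Y Y' : C} (f : hom X' X) (g : hom Y Y')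
  (φ : hom A (ihom L X Y)) :
  uncur (ihom_map L f g ∘ φ) = g ∘ uncur φ ∘ (idm A ⊗ f).
Proof.
  rewrite uncur_comp, uncur_ihom_map. unfold uncur.
  rewrite <- !compA. f_equal. f_equal. symmetry. apply tensm_interchange.
Qed.
End Transpose.

Section LeftAntipode.
Context {C : StrictMonCat} (L : LeftClosed C) (B : Bimonad C).
Local Notation T := (Tob B).
Local Notation Tm := (Tmor B).
Local Notation H := (fusion_l B).

Lemma Tmor_eqhom {X Y : C} (e : X = Y) : Tm (eqhom e) = eqhom (f_equal T e).
Proof. destruct e. apply Tmor_id. Qed.

Lemma fusion_l_Tmu (X Y : C) :
  H X Y ∘ Tm (idm X ⊗ mu B Y) = (idm _ ⊗ mu B Y) ∘ H X (T Y).
Proof.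
  unfold fusion_l. rewrite <- !compA, T2_nat, Tmor_id, !compA, <- !tensm_comp_r.
  rewrite mu_assoc. reflexivity.
Qed.

Lemma fusion_l_eta (A X : C) : H A X ∘ eta B (tens A (T X)) = eta B A ⊗ idm (T X).
Proof.
  unfold fusion_l. rewrite <- compA, eta_T2, <- tensm_comp, comp_id_l, mu_eta_l.
  reflexivity.
Qed.

Lemma fusion_l_mu (A X : C) :
  H A X ∘ mu B (tens A (T X)) = (mu B A ⊗ idm _) ∘ H (T A) X ∘ Tm (H A X).
Proof.
  unfold fusion_l. rewrite <- compA, mu_T2, Tmor_comp, !compA.
  rewrite (congr_last2 _ _ _ _ (T2_nat B _ _)), Tmor_id, !compA.
  rewrite <- !tensm_comp, !comp_id_l, !comp_id_r, mu_assoc. reflexivity.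
Qed.

Lemma T2_counit_r_eqhom (X : C) :
  eqhom (tens_unit_r (T X)) ∘ (idm (T X) ⊗ T0 B) ∘ T2 B X unit
  = eqhom (f_equal T (tens_unit_r X)).
Proof.
  pose proof (T2_counit_r B X) as E. rewrite castH_eqhom in E.
  transitivity (eqhom (tens_unit_r (T X)) ∘ ((idm (T X) ⊗ T0 B) ∘ T2 B X unit)
    ∘ eqhom (eq_sym (f_equal T (tens_unit_r X))) ∘ eqhom (f_equal T (tens_unit_r X))).
  { rewrite <- (compA _ (eqhom _)), eqhom_K, comp_id_r, compA. reflexivity. }
  rewrite E. apply comp_id_l.
Qed.

Lemma fusion_l_T0 (X : C) :
  (idm (T X) ⊗ T0 B) ∘ H X unit = (idm (T X) ⊗ T0 B) ∘ T2 B X unit ∘ Tm (idm X ⊗ T0 B).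
Proof.
  unfold fusion_l. rewrite compA, <- tensm_comp_r, mu_T0, tensm_comp_r, <- !compA.
  f_equal. rewrite T2_nat, Tmor_id. reflexivity.
Qed.

Lemma T2_coassoc_eqhom (X Y Z : C) :
  eqhom (tens_assoc (T X) (T Y) (T Z)) ∘ (T2 B X Y ⊗ idm (T Z)) ∘ T2 B (tens X Y) Z
  = (idm (T X) ⊗ T2 B Y Z) ∘ T2 B X (tens Y Z) ∘ eqhom (f_equal T (tens_assoc X Y Z)).
Proof.
  pose proof (T2_coassoc B X Y Z) as E. rewrite castH_eqhom in E. rewrite <- E.
  rewrite <- !compA, eqhom_K, comp_id_r. reflexivity.
Qed.

Definition fusion_l2 (A X Y : C)
  : hom (T (tens A (tens (T X) (T Y)))) (tens (T A) (tens (T X) (T Y))) :=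
  eqhom (tens_assoc (T A) (T X) (T Y)) ∘ (H A X ⊗ idm (T Y)) ∘ H (tens A (T X)) Y
  ∘ Tm (eqhom (eq_sym (tens_assoc A (T X) (T Y)))).

Lemma fusion_l2_T2 (A X Y : C) :
  fusion_l2 A X Y ∘ Tm (idm A ⊗ T2 B X Y) = (idm (T A) ⊗ T2 B X Y) ∘ H A (tens X Y).
Proof.
  unfold fusion_l2, fusion_l. rewrite tensm_comp_l, !compA.
  rewrite (congr_last3 _ _ _ _ _ (tensm_absorb_r _ _ _)), !compA, tensm_assoc_eqhom.
  rewrite (congr_last3 _ _ _ _ _ (T2_coassoc_eqhom _ _ _)), !compA.
  rewrite (congr_last2 _ _ _ _ (eq_trans (f_equal _ (Tmor_eqhom _)) (eqhom_K _ _))).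
  rewrite comp_id_r, (congr_last2 _ _ _ _ (T2_nat B _ _)), Tmor_id, !compA.
  rewrite <- !tensm_comp_r, mu_T2. reflexivity.
Qed.

Definition coev_mu (X Y : C) : hom X (ihom L (T (T Y)) (tens X (T Y))) :=
  cur L (idm X ⊗ mu B Y).

Lemma coev_mu_coev (X Y : C) :
  coev_mu X Y = ihom_map L (idm _) (idm X ⊗ mu B Y) ∘ coev L (T (T Y)) X.
Proof.
  apply uncur_inj. rewrite uncur_ihom_map_comp, uncur_coev, comp_id_r, tensm_id, comp_id_r.
  apply uncur_cur.
Qed.

Lemma ihom_map_coev_mu (X Y : C) :
  ihom_map L (Tm (mu B Y)) (idm _) ∘ coev_mu X Y
  = ihom_map L (mu B (T Y)) (idm _) ∘ coev_mu X Y.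
Proof.
  apply uncur_inj. rewrite !uncur_ihom_map_comp, !comp_id_l. unfold coev_mu.
  rewrite uncur_cur, <- !tensm_comp_r, mu_assoc. reflexivity.
Qed.

Lemma ihom_map_uncur_coev_mu {A X Y : C} (φ : hom A (ihom L (T X) Y)) :
  ihom_map L (idm _) (uncur L φ) ∘ coev_mu A X = ihom_map L (mu B X) (idm Y) ∘ φ.
Proof.
  apply uncur_inj. rewrite !uncur_ihom_map_comp, tensm_id, comp_id_r, comp_id_l.
  unfold coev_mu. rewrite uncur_cur. unfold uncur. rewrite <- !compA. reflexivity.
Qed.

Lemma ihom_map_Teta_mu {A X Y : C} (φ : hom A (ihom L (T X) Y)) :
  ihom_map L (Tm (eta B X)) (idm Y) ∘ (ihom_map L (mu B X) (idm Y) ∘ φ) = φ.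
Proof.
  apply uncur_inj. rewrite !uncur_ihom_map_comp, !comp_id_l, <- compA, <- tensm_comp_r.
  rewrite mu_eta_r, tensm_id. apply comp_id_r.
Qed.

Variable s : antipode_type L B.
Hypothesis Hs : is_left_antipode L B s.
Local Notation st X Y := (uncur L (s X Y)).

Lemma antipode_uncur_natX (X X' Y : C) (f : hom X' X) :
  st X' Y ∘ (Tm (ihom_map L (Tm f) (idm Y)) ⊗ idm X') = st X Y ∘ (idm _ ⊗ f).
Proof.
  destruct Hs as [natX _].
  rewrite <- uncur_comp, natX, uncur_ihom_map_comp, comp_id_l. reflexivity.
Qed.

Lemma antipode_uncur_natY (X Y Y' : C) (g : hom Y Y') :
  st X Y' ∘ (Tm (ihom_map L (idm (T X)) g) ⊗ idm X) = Tm g ∘ st X Y.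
Proof.
  destruct Hs as [_ [natY _]].
  rewrite <- uncur_comp, natY, uncur_ihom_map_comp, tensm_id, comp_id_r. reflexivity.
Qed.

Lemma antipode_uncur_ax1 (X Y : C) :
  Tm (ev L (T X) Y ∘ (idm _ ⊗ eta B X))
  = st (T X) Y ∘ (Tm (ihom_map L (mu B X) (idm Y)) ⊗ idm (T X)) ∘ T2 B (ihom L (T X) Y) X.
Proof.
  destruct Hs as [_ [_ [ax1 _]]].
  assert (ev_eta : ev L X Y ∘ (ihom_map L (eta B X) (idm Y) ⊗ idm X)
                   = ev L (T X) Y ∘ (idm _ ⊗ eta B X)).
  { change (uncur L (ihom_map L (eta B X) (idm Y)) = ev L (T X) Y ∘ (idm _ ⊗ eta B X)).
    rewrite uncur_ihom_map, comp_id_l. reflexivity. }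
  rewrite <- ev_eta, ax1, <- uncur_comp. reflexivity.
Qed.

Lemma antipode_uncur_ax2 (X Y : C) :
  idm (T Y) ⊗ eta B X = H Y X ∘ st X (tens Y (T X)) ∘ (Tm (coev L (T X) Y) ⊗ idm X).
Proof.
  destruct Hs as [_ [_ [_ ax2]]]. pose proof (f_equal (uncur L) (ax2 X Y)) as E.
  rewrite uncur_ihom_map_comp, uncur_coev, comp_id_r, tensm_id, comp_id_r in E.
  rewrite E, <- compA, uncur_ihom_map_comp, tensm_id, comp_id_r, uncur_comp.
  apply compA.
Qed.

Definition fusion_l_inv (A X : C) : hom (tens (T A) (T X)) (T (tens A (T X))) :=
  st (T X) (tens A (T X)) ∘ (Tm (coev_mu A X) ⊗ idm (T X)).
Local Notation G := fusion_l_inv.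

Lemma fusion_l_inv_r (X Y : C) : H X Y ∘ G X Y = idm _.
Proof.
  unfold G. rewrite coev_mu_coev, Tmor_comp, tensm_comp_l, (compA (st _ _)).
  rewrite antipode_uncur_natY, !compA, fusion_l_Tmu.
  transitivity ((idm (T X) ⊗ mu B Y) ∘ (H X (T Y) ∘ st (T Y) (tens X (T (T Y)))
                  ∘ (Tm (coev L (T (T Y)) X) ⊗ idm (T Y)))).
  { rewrite <- !compA. reflexivity. }
  rewrite <- antipode_uncur_ax2, <- tensm_comp, comp_id_l, mu_eta_l. apply tensm_id.
Qed.

Lemma fusion_l_inv_l (X Y : C) : G X Y ∘ H X Y = idm _.
Proof.
  unfold G, fusion_l. rewrite !compA, (congr_last2_2 _ _ _ _ _ (tensm_interchange _ _)).
  rewrite <- (antipode_uncur_natX _ _ _ (mu B Y)).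
  rewrite <- (compA _ _ (Tm (coev_mu X Y) ⊗ _)), <- tensm_comp_l, <- Tmor_comp.
  rewrite ihom_map_coev_mu, Tmor_comp, tensm_comp_l, <- (Tmor_id B (T Y)), <- !compA.
  rewrite <- T2_nat, !compA, Tmor_id, <- antipode_uncur_ax1, <- Tmor_comp.
  transitivity (Tm (idm (tens X (T Y)))); [f_equal | apply Tmor_id].
  rewrite <- compA, <- tensm_interchange, compA.
  change (uncur L (coev_mu X Y) ∘ (idm X ⊗ eta B (T Y)) = idm (tens X (T Y))).
  unfold coev_mu. rewrite uncur_cur, <- tensm_comp_r, mu_eta_l. apply tensm_id.
Qed.

Lemma antipode_uncur_Tmor (A X Y : C) (φ : hom A (ihom L (T X) Y)) :
  st X Y ∘ (Tm φ ⊗ idm X) = Tm (uncur L φ) ∘ G A X ∘ (idm (T A) ⊗ eta B X).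
Proof.
  symmetry. unfold G. rewrite !compA, <- antipode_uncur_natY.
  rewrite (congr_last2 _ _ _ _ (eq_sym (tensm_comp_l _ _))), <- Tmor_comp.
  rewrite ihom_map_uncur_coev_mu, <- compA, tensm_interchange, compA.
  rewrite <- antipode_uncur_natX, <- compA, <- tensm_comp_l, <- Tmor_comp.
  rewrite ihom_map_Teta_mu. reflexivity.
Qed.

Lemma antipode_uncur_fusion_l_inv (X Y : C) :
  st X Y = Tm (ev L (T X) Y) ∘ G (ihom L (T X) Y) X ∘ (idm _ ⊗ eta B X).
Proof.
  pose proof (antipode_uncur_Tmor _ _ _ (idm (ihom L (T X) Y))) as E.
  rewrite Tmor_id, tensm_id, comp_id_r, uncur_idm in E. exact E.
Qed.

Lemma fusion_l_inv_eta (A X : C) : G A X ∘ (eta B A ⊗ idm (T X)) = eta B (tens A (T X)).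
Proof.
  symmetry. rewrite <- (comp_id_r _ _ _ (eta B _)).
  apply (intertwine_inv (idm _) (idm _) (H A X) (G A X)).
  - apply comp_id_l.
  - apply fusion_l_inv_l.
  - rewrite comp_id_r. apply fusion_l_eta.
Qed.

Lemma fusion_l_inv_mu (A X : C) :
  G A X ∘ (mu B A ⊗ idm (T X)) = mu B _ ∘ Tm (G A X) ∘ G (T A) X.
Proof.
  symmetry. rewrite <- compA.
  apply (intertwine_inv (H (T A) X ∘ Tm (H A X)) (Tm (G A X) ∘ G (T A) X) (H A X) (G A X)).
  - rewrite <- compA, (compA (Tm (H A X))), <- Tmor_comp, fusion_l_inv_r, Tmor_id.
    rewrite comp_id_l. apply fusion_l_inv_r.
  - apply fusion_l_inv_l.
  - rewrite fusion_l_mu. symmetry. apply compA.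
Qed.

Lemma fusion_l_inv_Tmu (A X : C) :
  Tm (idm A ⊗ mu B X) ∘ G A (T X) = G A X ∘ (idm _ ⊗ mu B X).
Proof.
  apply (intertwine_inv (H A (T X)) (G A (T X)) (H A X) (G A X)).
  - apply fusion_l_inv_r.
  - apply fusion_l_inv_l.
  - apply fusion_l_Tmu.
Qed.

Definition fusion_l2_inv (A X Y : C)
  : hom (tens (T A) (tens (T X) (T Y))) (T (tens A (tens (T X) (T Y)))) :=
  Tm (eqhom (tens_assoc A (T X) (T Y))) ∘ G (tens A (T X)) Y ∘ (G A X ⊗ idm (T Y))
  ∘ eqhom (eq_sym (tens_assoc (T A) (T X) (T Y))).

Lemma fusion_l2_inv_l (A X Y : C) : fusion_l2_inv A X Y ∘ fusion_l2 A X Y = idm _.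
Proof.
  unfold fusion_l2_inv, fusion_l2. rewrite <- !compA.
  rewrite (compA (eqhom (eq_sym _))), eqhom_K, comp_id_l.
  rewrite (compA (_ ⊗ _) (_ ⊗ _)), <- tensm_comp_l, fusion_l_inv_l, tensm_id, comp_id_l.
  rewrite (compA (G _ _)), fusion_l_inv_l, comp_id_l, <- Tmor_comp, eqhom_K.
  apply Tmor_id.
Qed.

Lemma fusion_l_inv_T2 (A X Y : C) :
  Tm (idm A ⊗ T2 B X Y) ∘ G A (tens X Y) = fusion_l2_inv A X Y ∘ (idm (T A) ⊗ T2 B X Y).
Proof.
  apply (intertwine_inv (H A (tens X Y)) (G A (tens X Y)) (fusion_l2 A X Y)).
  - apply fusion_l_inv_r.
  - apply fusion_l2_inv_l.
  - apply fusion_l2_T2.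
Qed.

Lemma fusion_l_inv_T0 (X : C) :
  Tm (eqhom (tens_unit_r X)) ∘ Tm (idm X ⊗ T0 B) ∘ G X unit
  = eqhom (tens_unit_r (T X)) ∘ (idm (T X) ⊗ T0 B).
Proof.
  rewrite Tmor_eqhom, <- T2_counit_r_eqhom, <- !compA. f_equal.
  rewrite !compA, <- fusion_l_T0, <- compA, fusion_l_inv_r, comp_id_r. reflexivity.
Qed.

Lemma antipode_mu (X Y : C) :
  s X Y ∘ mu B (ihom L (T X) Y)
  = ihom_map L (idm X) (mu B Y) ∘ s X (T Y) ∘ Tm (s (T X) Y)
    ∘ Tm (Tm (ihom_map L (mu B X) (idm Y))).
Proof.
  assert (uncur_s_mu : uncur L (s (T X) Y ∘ Tm (ihom_map L (mu B X) (idm Y)))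
                       = Tm (ev L (T X) Y) ∘ G (ihom L (T X) Y) X).
  { rewrite uncur_comp, antipode_uncur_Tmor, uncur_ihom_map, comp_id_l, Tmor_comp.
    rewrite <- (compA (Tm _) (Tm _)), fusion_l_inv_Tmu, <- !compA, <- tensm_comp_r.
    rewrite mu_eta_l, tensm_id, comp_id_r. reflexivity. }
  apply uncur_inj.
  rewrite <- !compA, <- Tmor_comp, uncur_ihom_map_comp, tensm_id, comp_id_r, !uncur_comp.
  rewrite antipode_uncur_Tmor, uncur_s_mu, antipode_uncur_fusion_l_inv.
  rewrite (congr_last2_2 _ _ _ _ _ (eq_sym (tensm_interchange _ _))).
  rewrite (congr_last2 _ _ _ _ (fusion_l_inv_mu _ _)), !Tmor_comp, !compA, mu_nat.
  reflexivity.
Qed.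

Lemma antipode_eta (X Y : C) :
  s X Y ∘ eta B (ihom L (T X) Y) = ihom_map L (eta B X) (eta B Y).
Proof.
  apply uncur_inj. rewrite uncur_comp, uncur_ihom_map, antipode_uncur_fusion_l_inv.
  rewrite (congr_last2_2 _ _ _ _ _ (eq_sym (tensm_interchange _ _))).
  rewrite (congr_last2 _ _ _ _ (fusion_l_inv_eta _ _)), eta_nat. reflexivity.
Qed.

Lemma antipode_T2 (X Y Z : C) :
  ihom_curry L X Y (T Z) ∘ s (tens X Y) Z ∘ Tm (ihom_map L (T2 B X Y) (idm Z))
  = ihom_map L (idm X) (s Y Z) ∘ s X (ihom L (T Y) Z) ∘ Tm (ihom_curry L (T X) (T Y) Z).
Proof.
  apply uncur_inj. apply uncur_inj.
  rewrite <- !compA, uncur_ihom_map_comp, tensm_id, comp_id_r.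
  rewrite (uncur_comp L (ihom_curry L X Y (T Z))).
  rewrite (uncur_comp L (uncur L (ihom_curry L X Y (T Z)))).
  unfold ihom_curry at 1. rewrite !uncur_cur, <- compA, tensm_assoc_eqhom, tensm_id, compA.
  change (ev L (tens X Y) (T Z) ∘ ((s (tens X Y) Z ∘ Tm (ihom_map L (T2 B X Y) (idm Z)))
    ⊗ idm (tens X Y))) with (uncur L (s (tens X Y) Z ∘ Tm (ihom_map L (T2 B X Y) (idm Z)))).
  rewrite uncur_comp, antipode_uncur_Tmor, uncur_ihom_map, comp_id_l, Tmor_comp.
  rewrite (congr_last2 _ _ _ _ (fusion_l_inv_T2 _ _ _)), !compA.
  rewrite (congr_last2 _ _ _ _ (eq_sym (tensm_comp_r _ _))), eta_T2.
  unfold fusion_l2_inv. rewrite !compA.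
  rewrite (congr_last2 _ _ _ _ (eq_sym (tensm_assoc_eqhom _ _ _))), !compA.
  rewrite (congr_last2 _ _ _ _ (eqhom_K _ _)), comp_id_r, !uncur_comp.
  rewrite antipode_uncur_Tmor. unfold ihom_curry.
  rewrite uncur_cur, !tensm_comp_l, !compA, antipode_uncur_Tmor, uncur_cur.
  rewrite (congr_last2_2 _ _ _ _ _ (eq_sym (tensm_interchange _ _))).
  rewrite (congr_last2 _ _ _ _ (eq_sym (tensm_split_r _ _))), Tmor_comp.
  reflexivity.
Qed.

Lemma antipode_T0 (X : C) :
  ihom_unit L (T X) ∘ s unit X ∘ Tm (ihom_map L (T0 B) (idm X)) ∘ Tm (ihom_unit_inv L X)
  = idm (T X).
Proof.
  unfold ihom_unit. rewrite <- !compA, <- Tmor_comp, tensm_unit_r_eqhom, compA.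
  change (ev L unit (T X) ∘ ((s unit X ∘ Tm (ihom_map L (T0 B) (idm X) ∘ ihom_unit_inv L X))
     ⊗ idm unit)) with (uncur L (s unit X ∘ Tm (ihom_map L (T0 B) (idm X) ∘ ihom_unit_inv L X))).
  rewrite uncur_comp, antipode_uncur_Tmor, uncur_ihom_map_comp, comp_id_l.
  unfold ihom_unit_inv. rewrite uncur_cur, Tmor_comp, fusion_l_inv_T0.
  rewrite (congr_last2 _ _ _ _ (eq_sym (tensm_comp_r _ _))), eta_T0, tensm_id, comp_id_r.
  apply eqhom_K.
Qed.
End LeftAntipode.

Lemma antipode_unique {C : StrictMonCat} (L : LeftClosed C) (B : Bimonad C)
  (s s' : antipode_type L B) :
  is_left_antipode L B s -> is_left_antipode L B s' -> forall X Y : C, s X Y = s' X Y.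
Proof.
  intros Hs Hs' X Y. apply uncur_inj.
  rewrite (antipode_uncur_fusion_l_inv L B s Hs), (antipode_uncur_fusion_l_inv L B s' Hs').
  set (A := ihom L (Tob B X) Y).
  replace (fusion_l_inv L B s A X) with (fusion_l_inv L B s' A X); [reflexivity|].
  transitivity (fusion_l_inv L B s A X ∘ fusion_l B A X ∘ fusion_l_inv L B s' A X).
  - rewrite (fusion_l_inv_l L B s Hs), comp_id_l. reflexivity.
  - rewrite <- compA, (fusion_l_inv_r L B s' Hs'), comp_id_r. reflexivity.
Qed.

Theorem mainTheorem7 :
  forall (C : StrictMonCat) (L : LeftClosed C) (B : Bimonad C),
    (* (a) uniqueness of the left antipode *)
    (forall s s' : antipode_type L B,
        is_left_antipode L B s -> is_left_antipode L B s' ->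
        forall X Y : C, s X Y = s' X Y) /\
    (* (b) properties of the left antipode of a left Hopf monad *)
    (is_left_Hopf B ->
     forall s : antipode_type L B, is_left_antipode L B s ->
       (forall X Y : C,
          s X Y ∘ mu B (ihom L (Tob B X) Y)
          = ihom_map L (idm X) (mu B Y) ∘ s X (Tob B Y) ∘ Tmor B (s (Tob B X) Y)
            ∘ Tmor B (Tmor B (ihom_map L (mu B X) (idm Y)))) /\
       (forall X Y : C,
          s X Y ∘ eta B (ihom L (Tob B X) Y) = ihom_map L (eta B X) (eta B Y)) /\
       (forall X Y Z : C,
          ihom_curry L X Y (Tob B Z) ∘ s (tens X Y) Z
            ∘ Tmor B (ihom_map L (T2 B X Y) (idm Z))
          = ihom_map L (idm X) (s Y Z) ∘ s X (ihom L (Tob B Y) Z)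
            ∘ Tmor B (ihom_curry L (Tob B X) (Tob B Y) Z)) /\
       (forall X : C,
          ihom_unit L (Tob B X) ∘ s unit X ∘ Tmor B (ihom_map L (T0 B) (idm X))
            ∘ Tmor B (ihom_unit_inv L X)
          = idm (Tob B X))).
Proof.
  intros C L B. split.
  - apply antipode_unique.
  - intros _ s Hs. repeat split.
    + apply (antipode_mu L B s Hs).
    + apply (antipode_eta L B s Hs).
    + apply (antipode_T2 L B s Hs).
    + apply (antipode_T0 L B s Hs).
Qed.
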